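(* Let $r\in\mathbb{Q}_{>0}\setminus\mathbb{N}$ with $\mathsf{n}(r)>1$, and let $S_r=\langle r^n:n\in\mathbb{N}\rangle$. Then $\Delta(S_r)=\{|\mathsf{n}(r)-\mathsf{d}(r)|\}$.
   Context: $\mathbb{N}=\{0,1,2,\dots\}$. For $r\in\mathbb{Q}_{>0}$ write $r=\mathsf{n}(r)/\mathsf{d}(r)$ in lowest terms; $S_r$ is the additive submonoid of $\mathbb{Q}_{\ge0}$ generated by all nonnegative powers of $r$ (atomic under the stated hypotheses). For an atomic monoid $M$ and $x\in M$ with set of lengths $\mathsf{L}(x)$, a positive integer $d$ is a distance of $x$ if $\mathsf{L}(x)\cap\{l,\dots,l+d\}=\{l,l+d\}$ for some $l\in\mathsf{L}(x)$; $\Delta(M)$ is the union over $x\in M$ of the sets of distances of $x$. *)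

From mathcomp Require Import all_boot all_order all_algebra.
Set Implicit Arguments. Unset Strict Implicit. Unset Printing Implicit Defensive.
Import Order.TTheory GRing.Theory Num.Theory.
Local Open Scope ring_scope.

(* S_r : additive submonoid of Q_{>=0} generated by r^n, n in N.
   x is in S_r iff x is a finite sum of (possibly repeated) powers of r;
   the multiset of exponents is given as a list. *)
Definition inSr (r x : rat) : Prop :=
  exists s : seq nat, x = \sum_(n <- s) r ^+ n.

Definition atomSr (r a : rat) : Prop :=
  [/\ inSr r a, a != 0 &
      forall b c, inSr r b -> inSr r c -> a = b + c -> b = 0 \/ c = 0].

(* l is in L(x): x has a factorization into l atoms (a factorization is a
   finite multiset of atoms, represented as a list) *)
Definition lengthSr (r x : rat) (l : nat) : Prop :=
  exists s : seq rat,
    [/\ size s = l, forall a, a \in s -> atomSr r a & \sum_(a <- s) a = x].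

Definition distanceSr (r x : rat) (d : nat) : Prop :=
  (0 < d)%N /\
  exists l : nat, [/\ lengthSr r x l, lengthSr r x (l + d) &
     forall k : nat, (l < k < l + d)%N -> ~ lengthSr r x k].

Definition DeltaSr (r : rat) (d : nat) : Prop :=
  exists x, inSr r x /\ distanceSr r x d.

From mathcomp Require Import all_boot all_order all_algebra.
From mathcomp Require Import zify ring.
Set Implicit Arguments. Unset Strict Implicit. Unset Printing Implicit Defensive.
Import Order.TTheory GRing.Theory Num.Theory.
Local Open Scope ring_scope.

(* Write r = n/d in lowest terms, n > 1, d > 1, n <> d.  The relation
   n * r^k = d * r^(k+1) lets one "trade" n copies of r^k for d copies of
   r^(k+1), or conversely; each trade changes the length by e = |n - d|.
   Performing trades in the length-decreasing direction terminates in a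
   canonical factorization (when r > 1: every exponent used fewer than n
   times; when r < 1: every positive exponent used fewer than d times),
   which is unique up to permutation by a base-r digit argument
   (clearing denominators and reducing modulo n, resp. d).
   Consequently the set of lengths of any x is an arithmetic progression
   l0, l0 + e, ..., l0 + j*e with l0 the canonical length, atoms are
   exactly the powers of r, and Delta(S_r) = {e}: the element n = n*r^0
   = d*r^1 has the two lengths n and d. *)

Definition val (r : rat) (s : seq nat) : rat := \sum_(k <- s) r ^+ k.

Definition hasLength (r x : rat) (l : nat) : Prop :=
  exists2 s : seq nat, size s = l & val r s = x.

Lemma val_cons r k s : val r (k :: s) = r ^+ k + val r s.
Proof. by rewrite /val big_cons. Qed.

Lemma val_cat r s t : val r (s ++ t) = val r s + val r t.
Proof. by rewrite /val big_cat. Qed.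

Lemma val_nseq r m k : val r (nseq m k) = m%:R * r ^+ k.
Proof.
elim: m => [|m IH]; first by rewrite /val big_nil mul0r.
by rewrite /= val_cons IH mulrSr mulrDl mul1r addrC.
Qed.

Lemma val_split_count r k s :
  val r s = (count_mem k s)%:R * r ^+ k + val r (filter (predC1 k) s).
Proof.
elim: s => [|x s IH]; first by rewrite /val !big_nil mul0r add0r.
rewrite /= val_cons IH; case: eqP => [->|_] /=.
  by rewrite add1n mulrSr mulrDl mul1r; ring.
by rewrite add0n val_cons; ring.
Qed.

Lemma trade r (s : seq nat) k1 k2 p q : p%:R * r ^+ k1 = q%:R * r ^+ k2 ->
  (p <= count_mem k1 s)%N -> exists s', [/\ val r s' = val r s,
    (size s' + p = size s + q)%N & (q <= size s')%N].
Proof.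
move=> hpq hp.
exists (nseq (count_mem k1 s - p) k1 ++ nseq q k2 ++ filter (predC1 k1) s).
split.
- by rewrite !val_cat !val_nseq (val_split_count r k1 s) -hpq natrB //; ring.
- rewrite !size_cat !size_nseq size_filter.
  have : (count (pred1 k1) s + @count nat (predC1 k1) s = size s)%N.
    exact: count_predC.
  lia.
- by rewrite !size_cat !size_nseq; lia.
Qed.

Lemma atomSr_iff r : 0 < r ->
  (forall k t, val r t = r ^+ k -> size t = 1%N) ->
  forall a, atomSr r a <-> exists k, a = r ^+ k.
Proof.
move=> r0 single a; split.
  move=> [[s ->] a0 irred]; case: s a0 irred => [|x s].
    by rewrite big_nil eqxx.
  move=> _ irred; exists x.
  have hx : inSr r (r ^+ x) by exists [:: x]; rewrite big_seq1.
  have hs : inSr r (\sum_(k <- s) r ^+ k) by exists s.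
  have [h|h] := irred _ _ hx hs (big_cons _ _ _ _ _ _).
    by have := exprn_gt0 x r0; rewrite h ltxx.
  by rewrite big_cons h addr0.
move=> [k ->]; split.
- by exists [:: k]; rewrite big_seq1.
- by rewrite gt_eqF // exprn_gt0.
move=> b c [s1 ->] [s2 ->].
case: s1 => [|x1 s1]; first by left; rewrite big_nil.
case: s2 => [|x2 s2] e; first by right; rewrite big_nil.
have := single k (x1 :: s1 ++ x2 :: s2).
rewrite /val -cat_cons big_cat => /(_ (esym e)).
by rewrite size_cat /= addSn addnS.
Qed.

Lemma lengthSr_iff r : (forall a, atomSr r a <-> exists k, a = r ^+ k) ->
  forall x l, lengthSr r x l <-> hasLength r x l.
Proof.
move=> atoms x l; split.
  move=> [s [<- hs <-]]; elim: s hs => [|a s IH] hs.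
    by exists [::]; rewrite // /val !big_nil.
  have [k ->] := (atoms a).1 (hs a (mem_head _ _)).
  have [|t st vt] := IH.
    by move=> b hb; apply: hs; rewrite in_cons hb orbT.
  by exists (k :: t); rewrite /= ?st // val_cons big_cons vt.
move=> [t <- <-]; exists (map (fun k => r ^+ k) t); split.
- by rewrite size_map.
- by move=> a /mapP [k _ ->]; apply/atoms; exists k.
- by rewrite big_map.
Qed.

Definition APlengths (Lx : nat -> Prop) (l0 e : nat) : Prop :=
  forall l, Lx l -> exists2 j, l = (l0 + j * e)%N &
    forall i, (i <= j)%N -> Lx (l0 + i * e)%N.

Lemma APlengths_distance Lx l0 e : (0 < e)%N -> APlengths Lx l0 e ->
  forall l d, (0 < d)%N -> Lx l -> Lx (l + d)%N ->
  (forall k, (l < k < l + d)%N -> ~ Lx k) -> d = e.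
Proof.
move=> e0 hAP l d d0 hl hld gap.
have [j ej _] := hAP _ hl; have [j' ej' down] := hAP _ hld.
have jj' : (j < j')%N by rewrite -(ltn_pmul2r e0); lia.
case: (ltngtP j' j.+1) => [|lt|eq]; [lia| |by rewrite eq mulSn in ej'; lia].
have [lo hi] : (j * e < j.+1 * e /\ j.+1 * e < j' * e)%N.
  by rewrite !ltn_pmul2r.
by exfalso; apply: (gap _ _ (down _ (ltnW lt))); lia.
Qed.

Lemma APlengths_gap Lx l0 e : APlengths Lx l0 e -> forall l, Lx l ->
  forall k, (l < k < l + e)%N -> ~ Lx k.
Proof.
move=> hAP l hl k hk hLk.
have [j ej _] := hAP _ hl; have [j' ej' _] := hAP _ hLk.
have : (j * e < j' * e < j.+1 * e)%N by rewrite mulSn; lia.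
by case/andP; rewrite !ltn_mul2r => /andP [_ ?] /andP [_ ?]; lia.
Qed.

Section Canonical.
Variables (r : rat) (e : nat) (P : pred (seq nat)).
Hypothesis r_gt0 : 0 < r.
Hypothesis e_gt0 : (0 < e)%N.
Hypothesis reduce : forall s, ~~ P s -> exists s', [/\ val r s' = val r s,
  (size s' + e = size s)%N & (2 <= size s')%N].
Hypothesis canon_unique : forall s t, P s -> P t -> val r s = val r t ->
  perm_eq s t.
Hypothesis canon_single : forall k, P [:: k].

Lemma reduce_chain t : exists u j, [/\ P u, val r u = val r t,
  size t = (size u + j * e)%N,
  forall i, (i <= j)%N -> hasLength r (val r t) (size u + i * e)
  & (0 < j -> 2 <= size u)%N].
Proof.
have [m] := ubnP (size t); elim: m t => // m IH t st.
have [Pt|nPt] := boolP (P t).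
  exists t, 0%N; split=> // [|i]; first by rewrite addn0.
  by rewrite leqn0 => /eqP ->; exists t; rewrite ?addn0.
have [t' [vt' st' two]] := reduce nPt.
have [|u [j [Pu vu stu lens big]]] := IH t'; first lia.
exists u, j.+1; rewrite -vt'; split=> //; first by rewrite mulSn; lia.
  move=> i; rewrite leq_eqVlt => /orP [/eqP ->|]; last exact: lens.
  by exists t; rewrite // mulSn; lia.
by case: (posnP j) stu => [->|/big]; lia.
Qed.

Lemma canon_size s t : P s -> P t -> val r s = val r t -> size s = size t.
Proof. by move=> Ps Pt /(canon_unique Ps Pt)/perm_size. Qed.

Lemma power_factorization k t : val r t = r ^+ k -> size t = 1%N.
Proof.
move=> vt; have [u [j [Pu vu stu _ big]]] := reduce_chain t.
have su : size u = 1%N.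
  by apply: (canon_size Pu (canon_single k)); rewrite vu vt /val big_seq1.
have j0 : j = 0%N by case: (posnP j) => // /big; rewrite su.
by rewrite stu su j0.
Qed.

Lemma lengths_progression s :
  exists l0, APlengths (hasLength r (val r s)) l0 e.
Proof.
have [u [_ [Pu vu _ _ _]]] := reduce_chain s; exists (size u).
move=> l [t <- vt]; have [u' [j [Pu' vu' stu' lens _]]] := reduce_chain t.
have eu : size u' = size u by apply: canon_size; rewrite // vu' vt vu.
by exists j; rewrite -?eu // -vt.
Qed.

Lemma DeltaSr_canonical x0 l1 :
  hasLength r x0 l1 -> hasLength r x0 (l1 + e) ->
  forall d, DeltaSr r d <-> d = e.
Proof.
move=> hl1 hl2 d.
have lens := lengthSr_iff (atomSr_iff r_gt0 power_factorization).
split.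
  move=> [_ [[s ->] [d0 [l [h1 h2 gap]]]]].
  have [l0 hAP] := lengths_progression s.
  apply: (APlengths_distance e_gt0 hAP d0 ((lens _ _).1 h1) ((lens _ _).1 h2)).
  by move=> k hk /lens; apply: gap.
move=> ->; have [s _ vs] := hl1; have [l0 hAP] := lengths_progression s.
rewrite vs in hAP; exists x0; split; first by exists s.
split=> //; exists l1; split; [exact/lens|exact/lens|].
by move=> k hk /lens; apply: (APlengths_gap hAP hl1 hk).
Qed.

End Canonical.

Definition expand (r : rat) (N : nat) (f : nat -> nat) : rat :=
  \sum_(i < N) (f i)%:R * r ^+ i.

Lemma expand_recl r N f :
  expand r N.+1 f = (f 0%N)%:R + r * expand r N (fun i => f i.+1).
Proof.
rewrite /expand big_ord_recl expr0 mulr1 big_distrr; congr (_ + _).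
by apply: eq_bigr => i _ /=; rewrite exprS; ring.
Qed.

Lemma expand_recr r N f :
  expand r N.+1 f = expand r N f + (f N)%:R * r ^+ N.
Proof. by rewrite /expand big_ord_recr. Qed.

Lemma val_expand r N s : all (fun k => k < N)%N s ->
  val r s = expand r N (fun i => count_mem i s).
Proof.
elim: s => [_|x s IH /= /andP [xN sN]].
  by rewrite /val big_nil /expand big1 // => i _; rewrite mul0r.
have delta : r ^+ x = \sum_(i < N) (x == i :> nat)%:R * r ^+ i.
  rewrite (bigD1 (Ordinal xN)) //= eqxx mul1r big1 ?addr0 // => i ix.
  case: eqP => [xi|]; last by rewrite mul0r.
  by move/eqP: ix; case; apply: val_inj.
rewrite val_cons IH // delta /expand -big_split.
by apply: eq_bigr => i _ /=; rewrite natrD mulrDl.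
Qed.

Lemma exponents_bound s : all (fun k => k < (sumn s).+1)%N s.
Proof.
elim: s => [|x s IH] //=; rewrite ltnS leq_addr /=.
by apply: sub_all IH => k /= h; apply: leq_trans h _; rewrite ltnS leq_addl.
Qed.

Lemma perm_eq_counts N s t : all (fun k => k < N)%N s ->
  all (fun k => k < N)%N t ->
  (forall i, i < N -> count_mem i s = count_mem i t)%N -> perm_eq s t.
Proof.
move=> sN tN eqc; apply/allP => i /=; rewrite mem_cat => it; apply/eqP.
have iN : (i < N)%N by case/orP: it => [/(allP sN)|/(allP tN)].
exact: eqc.
Qed.

Lemma digit_cancel p q k a b X Y : coprime p q -> (a < p)%N -> (b < p)%N ->
  (p %| X)%N -> (p %| Y)%N -> (X + a * q ^ k = Y + b * q ^ k)%N -> a = b.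
Proof.
move=> cpq.
wlog ab : a b X Y / (a <= b)%N.
  move=> gen ha hb hX hY e; case: (leqP a b) => h; first exact: (gen a b X Y).
  by apply/esym; apply: (gen b a Y X) => //; apply: ltnW.
move=> ha hb hX hY e.
have : (p %| (b - a) * q ^ k)%N.
  have -> : ((b - a) * q ^ k = X - Y)%N.
    by have := leq_mul2r (q ^ k) a b; rewrite ab orbT mulnBl; lia.
  exact: dvdn_sub.
rewrite Gauss_dvdl ?coprimeXr // => hd.
case: (posnP (b - a)) => h0; first lia.
by have := dvdn_leq h0 hd; lia.
Qed.

(* Numerator of d^N times an expansion in base r = n/d. *)
Definition cleared (n d N : nat) (f : nat -> nat) : nat :=
  (\sum_(i < N) f i * n ^ i * d ^ (N - i))%N.

Section Digits.
Variables (r : rat) (n d : nat).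
Hypothesis nd_coprime : coprime n d.
Hypothesis r_num_den : r * d%:R = n%:R.

Lemma expand_clear N f : d%:R ^+ N * expand r N f = (cleared n d N f)%:R.
Proof.
rewrite /expand /cleared big_distrr natr_sum; apply: eq_bigr => i _.
have -> : d%:R ^+ N = d%:R ^+ i * d%:R ^+ (N - i) :> rat.
  by rewrite -exprD subnKC // ltnW.
rewrite !natrM !natrX -r_num_den exprMn.
set a := r ^+ i; set b := d%:R ^+ i; set c := d%:R ^+ (N - i).
by change (b * c * ((f i)%:R * a) = (f i)%:R * (a * b) * c); ring.
Qed.

(* Lowest digit first: modulo n the constant digit is determined. *)
Lemma expand_inj_hi : r != 0 -> forall N a b,
  (forall i, a i < n)%N -> (forall i, b i < n)%N ->
  expand r N a = expand r N b -> forall i, (i < N)%N -> a i = b i.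
Proof.
move=> r0; elim=> [|N IH] a b ha hb e i iN //.
have clear f : d%:R ^+ N.+1 * expand r N.+1 f =
    (cleared n d N (fun j => f j.+1) * n + f 0%N * d ^ N.+1)%:R.
  rewrite expand_recl natrD !natrM natrX -expand_clear exprS -r_num_den.
  by ring.
have a0 : a 0%N = b 0%N.
  have /eqP := congr1 (fun x => d%:R ^+ N.+1 * x) e.
  rewrite /= !clear eqr_nat => /eqP.
  by apply: (digit_cancel nd_coprime (ha 0%N) (hb 0%N)); apply: dvdn_mull.
move: e; rewrite !expand_recl a0 => /addrI /(mulfI r0) e.
by case: i iN => [|i] iN //; apply: (IH (fun i => a i.+1) (fun i => b i.+1)).
Qed.

(* Highest digit first: modulo d the leading digit is determined. *)
Lemma expand_inj_lo N a b :
  (forall i, 0 < i -> a i < d)%N -> (forall i, 0 < i -> b i < d)%N ->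
  expand r N a = expand r N b -> forall i, (i < N)%N -> a i = b i.
Proof.
move=> ha hb; elim: N => [|N IH] e i iN //.
have [N0|N0] := posnP N.
  move: e iN; rewrite N0 /expand !big_ord1 /= !expr0 !mulr1 => /eqP.
  by rewrite eqr_nat => /eqP; case: i.
have clear f : d%:R ^+ N * expand r N.+1 f = (cleared n d N f + f N * n ^ N)%:R.
  rewrite expand_recr mulrDr expand_clear natrD natrM natrX -r_num_den.
  by congr (_ + _); rewrite exprMn; ring.
have dvd_cleared f : (d %| cleared n d N f)%N.
  apply: dvdn_sum => j _; apply: dvdn_mull.
  have := ltn_ord j; rewrite -subn_gt0; case: (N - j)%N => // k _.
  by rewrite expnS dvdn_mulr.
have aN : a N = b N.
  have /eqP := congr1 (fun x => d%:R ^+ N * x) e.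
  rewrite /= !clear eqr_nat => /eqP.
  apply: digit_cancel (ha N N0) (hb N N0) (dvd_cleared a) (dvd_cleared b).
  by rewrite coprime_sym.
move: e; rewrite !expand_recr aN => /addIr e.
by move: iN; rewrite ltnS leq_eqVlt => /orP [/eqP -> //|]; apply: IH.
Qed.

End Digits.

Definition canon_hi (n : nat) (s : seq nat) : bool :=
  all (fun k => count_mem k s < n)%N s.

Definition canon_lo (d : nat) (s : seq nat) : bool :=
  all (fun k => (k == 0%N) || (count_mem k s < d)%N) s.

(* Exponents absent from s have count 0, so the bounds hold everywhere. *)
Lemma canon_hi_count m s : (0 < m)%N -> canon_hi m s ->
  forall i, (count_mem i s < m)%N.
Proof.
by move=> m0 cs i; case: (boolP (i \in s)) => [/(allP cs)|/count_memPn ->].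
Qed.

Lemma canon_lo_count m s : (0 < m)%N -> canon_lo m s ->
  forall i, (0 < i)%N -> (count_mem i s < m)%N.
Proof.
move=> m0 cs i i0; case: (boolP (i \in s)) => [/(allP cs)|/count_memPn ->] //=.
by rewrite gtn_eqF.
Qed.

Section BaseND.
Variables (r : rat) (n d : nat).
Hypothesis nd_coprime : coprime n d.
Hypothesis r_num_den : r * d%:R = n%:R.
Hypothesis n_gt1 : (1 < n)%N.
Hypothesis d_gt1 : (1 < d)%N.

Lemma base_gt0 : 0 < r.
Proof.
have d0 : 0 < d%:R :> rat by rewrite ltr0n; lia.
by rewrite -(pmulr_lgt0 _ d0) r_num_den ltr0n; lia.
Qed.

Lemma trade_rel k : n%:R * r ^+ k = d%:R * r ^+ k.+1.
Proof. by rewrite exprSr mulrCA [d%:R * r]mulrC r_num_den mulrC. Qed.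

Lemma length_n : hasLength r n%:R n.
Proof. by exists (nseq n 0%N); rewrite ?size_nseq // val_nseq expr0 mulr1. Qed.

Lemma length_d : hasLength r n%:R d.
Proof.
by exists (nseq d 1%N); rewrite ?size_nseq // val_nseq -trade_rel expr0 mulr1.
Qed.

(* Canonical factorizations are unique up to order: their exponent counts
   are base-r digits of the common value. *)
Lemma canon_hi_unique s t : canon_hi n s -> canon_hi n t ->
  val r s = val r t -> perm_eq s t.
Proof.
move=> cs ct v; have := exponents_bound (s ++ t).
rewrite all_cat => /andP [bs bt]; apply: (perm_eq_counts bs bt).
apply: (expand_inj_hi nd_coprime r_num_den (lt0r_neq0 base_gt0)).
- by apply: canon_hi_count; first lia.
- by apply: canon_hi_count; first lia.
- by rewrite -!val_expand.
Qed.

Lemma canon_lo_unique s t : canon_lo d s -> canon_lo d t ->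
  val r s = val r t -> perm_eq s t.
Proof.
move=> cs ct v; have := exponents_bound (s ++ t).
rewrite all_cat => /andP [bs bt]; apply: (perm_eq_counts bs bt).
apply: (expand_inj_lo nd_coprime r_num_den).
- by apply: canon_lo_count; first lia.
- by apply: canon_lo_count; first lia.
- by rewrite -!val_expand.
Qed.

Lemma reduce_hi : (d < n)%N -> forall s, ~~ canon_hi n s -> exists s',
  [/\ val r s' = val r s, (size s' + (n - d) = size s)%N & (2 <= size s')%N].
Proof.
move=> dn s /allPn [k _]; rewrite -leqNgt => hk.
have [s' [v sz big]] := trade (trade_rel k) hk.
by exists s'; split=> //; lia.
Qed.

Lemma reduce_lo : (n < d)%N -> forall s, ~~ canon_lo d s -> exists s',
  [/\ val r s' = val r s, (size s' + (d - n) = size s)%N & (2 <= size s')%N].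
Proof.
move=> nd s /allPn [[|k] _] //=; rewrite -leqNgt => hk.
have [s' [v sz big]] := trade (esym (trade_rel k)) hk.
by exists s'; split=> //; lia.
Qed.

Lemma Delta_gt1 : (d < n)%N -> forall e, DeltaSr r e <-> e = (n - d)%N.
Proof.
move=> dn; apply: (DeltaSr_canonical base_gt0 _ (reduce_hi dn) canon_hi_unique
  _ length_d); first lia.
  by move=> k; rewrite /canon_hi /= eqxx andbT; lia.
by rewrite subnKC ?(ltnW dn) //; apply: length_n.
Qed.

Lemma Delta_lt1 : (n < d)%N -> forall e, DeltaSr r e <-> e = (d - n)%N.
Proof.
move=> nd; apply: (DeltaSr_canonical base_gt0 _ (reduce_lo nd) canon_lo_unique
  _ length_n); first lia.
  by move=> k; rewrite /canon_lo /= eqxx andbT orbC; case: k => //=; lia.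
by rewrite subnKC ?(ltnW nd) //; apply: length_d.
Qed.

End BaseND.

Lemma lowest_terms r : 0 < numq r -> exists n d : nat,
  [/\ numq r = n%:Z, denq r = d%:Z, coprime n d & r * d%:R = n%:R].
Proof.
move=> num_gt0.
have [n hn] : exists n : nat, numq r = n%:Z.
  by exists `|numq r|%N; rewrite gez0_abs // ltW.
have [d hd] : exists d : nat, denq r = d%:Z.
  by exists `|denq r|%N; rewrite gez0_abs // ltW // denq_gt0.
exists n, d; split=> //; first by have := coprime_num_den r; rewrite hn hd.
rewrite -{1}(divq_num_den r) hn hd divfK //.
by rewrite -hd intr_eq0 denq_neq0.
Qed.

Theorem mainTheorem10 (r : rat) :
  0 < r -> ~ (exists m : nat, r = m%:R) -> (1 < numq r)%R ->
  forall d : nat, DeltaSr r d <-> d = `|numq r - denq r|%N.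
Proof.
move=> _ notnat num_gt1.
have [n [d [hn hd nd_coprime r_num_den]]] :=
  lowest_terms (lt_trans ltr01 num_gt1).
rewrite hn hd; have n_gt1 : (1 < n)%N by rewrite -ltz_nat -hn.
have d_gt1 : (1 < d)%N.
  have : d != 0%N by rewrite -lt0n -ltz_nat -hd denq_gt0.
  have : d != 1%N.
    by apply/eqP => d1; apply: notnat; exists n; rewrite -r_num_den d1 mulr1.
  lia.
have [nd|dn|nd] := ltngtP n d.
- by move=> e; rewrite (Delta_lt1 nd_coprime r_num_den n_gt1 d_gt1 nd); lia.
- by move=> e; rewrite (Delta_gt1 nd_coprime r_num_den n_gt1 d_gt1 dn); lia.
- by move: nd_coprime; rewrite nd /coprime gcdnn => /eqP d1; lia.
Qed.
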